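(* Let $M\in\mathrm{Mat}(2,\mathbb{Z})$ with $\mathrm{mgcd}(M)=\mu\neq0$, and let $C=\begin{pmatrix}0&-D\\1&T\end{pmatrix}$ with $D=\det(M)$, $T=\mathrm{trace}(M)$ be its companion matrix. Then for all integers $n\ge2$ with $\gcd(n,\mu)=1$, the reductions of $M$ and $C$ mod $n$ are $\mathrm{Mat}(2,\mathbb{Z}_n)^\times$-conjugate. In this case, $M$ and $C$ share the same local statistics on $L_n$.
   Context: For $M=\begin{pmatrix}a&b\\c&d\end{pmatrix}\in\mathrm{Mat}(2,\mathbb{Z})$, $\mathrm{mgcd}(M)=\gcd(b,c,d-a)\ge0$ (equal to $0$ iff $b=c=d-a=0$). $\mathbb{Z}_n=\mathbb{Z}/n\mathbb{Z}$ and $\mathrm{Mat}(2,\mathbb{Z}_n)^\times$ is the group of invertible $2\times2$ matrices over $\mathbb{Z}_n$. $L_n=\{(\frac{k}{n},\frac{\ell}{n}):0\le k,\ell<n\}\subset\mathbb{T}^2=\mathbb{R}^2/\mathbb{Z}^2$, on which an integer matrix acts by multiplication mod $1$. Two integer matrices have the same local statistics on $L_n$ if the directed pseudo-graphs on $L_n$ they induce (vertices the points of $L_n$, a directed edge from $x$ to $Mx$) are isomorphic as graphs. *)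

From HB Require Import structures.
From mathcomp Require Import all_boot all_order all_algebra.
Set Implicit Arguments. Unset Strict Implicit. Unset Printing Implicit Defensive.
Import Order.TTheory GRing.Theory Num.Theory.
Local Open Scope ring_scope.

Definition mgcd (M : 'M[int]_2) : int :=
  gcdz (gcdz (M 0 1) (M 1 0)) (M 1 1 - M 0 0).

Definition companion (M : 'M[int]_2) : 'M[int]_2 :=
  \matrix_(i < 2, j < 2)
    if (i == 0) && (j == 0) then 0
    else if (i == 0) then - \det M
    else if (j == 0) then 1
    else \tr M.

(* reduction mod n of an integer matrix; used for n >= 2 (so 'Z_n = Z/nZ) *)
Definition red_mx (n : nat) (M : 'M[int]_2) : 'M['Z_n]_2 :=
  map_mx (fun z : int => z%:~R) M.

(* The grid L_n = {(k/n, l/n) : 0 <= k,l < n} in T^2, where the point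
   (k/n, l/n) is encoded by the pair (k, l) : 'Z_n * 'Z_n  (n >= 2). *)
Definition Lgrid (n : nat) : finType := ('Z_n * 'Z_n)%type.

(* action of an integer matrix on L_n by multiplication mod 1:
   M (k/n, l/n) = ((a k + b l)/n, (c k + d l)/n) mod 1, i.e.
   (k, l) |-> (a k + b l mod n, c k + d l mod n). *)
Definition torus_act (n : nat) (M : 'M[int]_2) (x : Lgrid n) : Lgrid n :=
  ((M 0 0)%:~R * x.1 + (M 0 1)%:~R * x.2,
   (M 1 0)%:~R * x.1 + (M 1 1)%:~R * x.2).

Definition edge (n : nat) (M : 'M[int]_2) : rel (Lgrid n) :=
  fun x y => @torus_act n M x == y.

Definition same_local_stats (n : nat) (M N : 'M[int]_2) : Prop :=
  exists f : Lgrid n -> Lgrid n,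
    bijective f /\ forall x y, @edge n M x y = @edge n N (f x) (f y).

Definition GL_conj (n : nat) (A B : 'M['Z_n]_2) : Prop :=
  exists P : 'M['Z_n]_2, P \in unitmx /\ P *m A *m invmx P = B.

From HB Require Import structures.
From mathcomp Require Import all_boot all_order all_algebra.
Import Order.TTheory GRing.Theory Num.Theory.
From mathcomp Require Import ring.
Local Open Scope ring_scope.

(* If v = (x, y) is such that det [v | Mv] is a unit mod n, then P = [v | Mv]
   satisfies M P = P C by Cayley-Hamilton, so M and C are conjugate mod n, and
   u |-> P u is an isomorphism between the graphs they induce on L_n.  The
   determinant det [v | Mv] = c x^2 + (d - a) x y - b y^2 is a binary quadratic
   form whose content mgcd M is prime to n, and such a form takes a value prime
   to n. *)

Lemma coprime_prime_dvdP (n m : nat) : (0 < n)%N ->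
  reflect (forall p, prime p -> (p %| n)%N -> ~~ (p %| m)%N) (coprime n m).
Proof.
move=> n_gt0; apply: (iffP idP) => [nm p p_pr p_n | noP].
  by rewrite -prime_coprime //; apply: coprime_dvdl p_n nm.
apply/negPn/negP => nm.
have g_gt1 : (1 < gcdn n m)%N by rewrite ltn_neqAle eq_sym nm gcdn_gt0 n_gt0.
have := noP _ (pdiv_prime g_gt1) (dvdn_trans (pdiv_dvd _) (dvdn_gcdl n m)).
by rewrite (dvdn_trans (pdiv_dvd _) (dvdn_gcdr n m)).
Qed.

Lemma prime_dvd_partn (pi : nat_pred) (n p : nat) : (0 < n)%N -> prime p ->
  (p %| n)%N -> (p %| n`_pi)%N = (p \in pi).
Proof.
move=> n_gt0 p_pr p_n; apply/idP/idP => [|p_pi].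
  exact: (pnatP _ (part_gt0 pi n) (part_pnat pi n)).
by have := partn_dvd pi n_gt0 p_n; rewrite part_pnat_id // pnatE.
Qed.

Definition binary_form {R : pzRingType} (a b c x y : R) : R :=
  a * x ^+ 2 + b * x * y + c * y ^+ 2.

Lemma rmorph_binary_form (R S : nzRingType) (f : {rmorphism R -> S})
    (a b c x y : R) :
  f (binary_form a b c x y) = binary_form (f a) (f b) (f c) (f x) (f y).
Proof. by rewrite /binary_form !(rmorphD, rmorphM, rmorphXn). Qed.

Lemma binary_form_neq0 (R : idomainType) (a b c x y : R) :
  [|| a != 0, b != 0 | c != 0] ->
  (x == 0) = (a == 0) && (c != 0) -> (y == 0) = (a != 0) ->
  binary_form a b c x y != 0.
Proof.
rewrite /binary_form; have [-> | a0] /= := eqVneq a 0; last first.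
  move=> _ /negbT x0 /eqP->.
  by rewrite !(expr0n, mulr0, addr0) mulf_neq0 ?expf_neq0.
have [-> | c0] /= := eqVneq c 0; rewrite ?orbF.
  by move=> b0 /negbT x0 /negbT y0; rewrite !(mul0r, add0r, addr0) !mulf_neq0.
move=> _ /eqP-> /negbT y0.
by rewrite !(mul0r, expr0n, mulr0, add0r) mulf_neq0 ?expf_neq0.
Qed.

Lemma binary_form_coprime (a b c : int) (n : nat) : (0 < n)%N ->
  coprime n `|gcdz (gcdz a b) c| ->
  exists x y : int, coprime n `|binary_form a b c x y|.
Proof.
move=> n_gt0 n_abc.
pose pi_y : nat_pred := [pred p | ~~ (p %| `|a|)%N].
pose pi_x : nat_pred := [pred p | (p %| `|a|)%N && ~~ (p %| `|c|)%N].
(* For p | n, the form reduces mod p to its single monomial a x^2, c y^2 or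
   b x y that survives, according as p does not divide a, divides a but not c,
   or divides both. *)
exists (n`_pi_x)%:Z, (n`_pi_y)%:Z.
apply/coprime_prime_dvdP => // p p_pr p_n.
have pFp := pchar_Fp p_pr.
have dvdFp (z : int) : (p %| `|z|)%N = ((z%:~R : 'F_p) == 0).
  by rewrite -(dvdz_pcharf pFp).
rewrite dvdFp rmorph_binary_form; apply: binary_form_neq0; rewrite -!dvdFp.
- have : ~~ (p %| `|gcdz (gcdz a b) c|)%N.
    by rewrite -prime_coprime //; apply: coprime_dvdl p_n n_abc.
  have dvdzE (z : int) : (p %| `|z|)%N = (p%:Z %| z)%Z by [].
  by rewrite !dvdzE !dvdz_gcd !negb_and -orbA.
- by rewrite absz_nat prime_dvd_partn.
- by rewrite absz_nat prime_dvd_partn.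
Qed.

Lemma big_ord2 (R : nmodType) (F : 'I_2 -> R) : \sum_(i < 2) F i = F 0 + F 1.
Proof.
by rewrite !big_ord_recl big_ord0 addr0; congr (F _ + F _); apply: val_inj.
Qed.

Lemma ord2P (i : 'I_2) : i = 0 \/ i = 1.
Proof. by case: i => [[|[|//]] ?]; [left | right]; apply: val_inj. Qed.

Lemma det_mx2 (R : comNzRingType) (A : 'M[R]_2) :
  \det A = A 0 0 * A 1 1 - A 0 1 * A 1 0.
Proof.
rewrite (expand_det_row _ 0) big_ord2 /cofactor !det_mx11 !mxE /=.
have -> : lift 0 (0 : 'I_1) = 1 by apply: val_inj.
have -> : lift 1 (0 : 'I_1) = 0 by apply: val_inj.
by rewrite expr0 expr1 mul1r mulN1r mulrN.
Qed.

Lemma mxtrace2 (R : comNzRingType) (A : 'M[R]_2) : \tr A = A 0 0 + A 1 1.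
Proof. exact: big_ord2. Qed.

Definition cyclic_basis (M : 'M[int]_2) (x y : int) : 'M[int]_2 :=
  \matrix_(i, j) if j == 0 then (if i == 0 then x else y)
                 else M i 0 * x + M i 1 * y.

Lemma mul_cyclic_basis (M : 'M[int]_2) (x y : int) :
  M *m cyclic_basis M x y = cyclic_basis M x y *m companion M.
Proof.
apply/matrixP => i j; rewrite !mxE !big_ord2 !mxE det_mx2 mxtrace2.
by case: (ord2P i) => ->; case: (ord2P j) => -> /=; ring.
Qed.

Lemma det_cyclic_basis (M : 'M[int]_2) (x y : int) :
  \det (cyclic_basis M x y) = binary_form (M 1 0) (M 1 1 - M 0 0) (- M 0 1) x y.
Proof. by rewrite det_mx2 !mxE /binary_form /=; ring. Qed.

Lemma unitZp_intE (n : nat) (z : int) : (1 < n)%N ->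
  ((z%:~R : 'Z_n) \is a GRing.unit) = coprime n `|z|.
Proof.
move=> n_gt1; case: z => k /=; first by rewrite -pmulrn unitZpE.
by rewrite NegzE mulrNz unitrN -pmulrn unitZpE.
Qed.

Lemma intertwine_GL_conj (n : nat) (A B P : 'M['Z_n]_2) :
  P \in unitmx -> A *m P = P *m B -> GL_conj A B.
Proof.
move=> P_unit AP_PB; exists (invmx P); split; first by rewrite unitmx_inv.
by rewrite invmxK -mulmxA AP_PB mulKmx.
Qed.

Definition mx_act {n : nat} (A : 'M['Z_n]_2) (u : Lgrid n) : Lgrid n :=
  (A 0 0 * u.1 + A 0 1 * u.2, A 1 0 * u.1 + A 1 1 * u.2).

Lemma torus_actE (n : nat) (M : 'M[int]_2) :
  torus_act M =1 mx_act (red_mx n M).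
Proof. by move=> u; rewrite /mx_act !mxE. Qed.

Lemma mx_actM (n : nat) (A B : 'M['Z_n]_2) (u : Lgrid n) :
  mx_act (A *m B) u = mx_act A (mx_act B u).
Proof. by rewrite /mx_act !mxE !big_ord2 /=; congr pair; ring. Qed.

Lemma mx_act1 (n : nat) : mx_act (1%:M : 'M['Z_n]_2) =1 id.
Proof.
by case=> u1 u2; rewrite /mx_act !mxE /= !(mul1r, mul0r, addr0, add0r).
Qed.

Lemma mx_actK {n : nat} {P : 'M['Z_n]_2} :
  P \in unitmx -> cancel (mx_act P) (mx_act (invmx P)).
Proof. by move=> P_unit u; rewrite -mx_actM mulVmx // mx_act1. Qed.

Lemma mx_actVK {n : nat} {P : 'M['Z_n]_2} :
  P \in unitmx -> cancel (mx_act (invmx P)) (mx_act P).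
Proof. by move=> P_unit u; rewrite -mx_actM mulmxV // mx_act1. Qed.

Lemma GL_conj_same_local_stats (n : nat) (M N : 'M[int]_2) :
  GL_conj (red_mx n M) (red_mx n N) -> same_local_stats n M N.
Proof.
move=> [P [P_unit PMP'_N]]; exists (mx_act P); split.
  by exists (mx_act (invmx P)); [apply: mx_actK | apply: mx_actVK].
have NP_PM : red_mx n N *m P = P *m red_mx n M.
  by rewrite -PMP'_N mulmxKV.
move=> u w; rewrite /edge !torus_actE -mx_actM NP_PM mx_actM.
by rewrite (inj_eq (can_inj (mx_actK P_unit))).
Qed.

Theorem proposition33 (M : 'M[int]_2) :
  mgcd M != 0 ->
  forall n : nat, (2 <= n)%N -> coprime n `|mgcd M|%N ->
    GL_conj (red_mx n M) (red_mx n (companion M)) /\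
    same_local_stats n M (companion M).
Proof.
(* mgcd M != 0 is implied by coprimality with n >= 2. *)
move=> _ n n_gt1 n_mu.
have [x [y n_det]] :
    exists x y, coprime n `|binary_form (M 1 0) (M 1 1 - M 0 0) (- M 0 1) x y|.
  apply: binary_form_coprime; first exact: ltnW.
  by rewrite gcdzN gcdzAC [gcdz (M 1 0) _]gcdzC.
have conj_MC : GL_conj (red_mx n M) (red_mx n (companion M)).
  apply: (@intertwine_GL_conj _ _ _ (red_mx n (cyclic_basis M x y))).
    by rewrite unitmxE det_map_mx det_cyclic_basis unitZp_intE.
  by rewrite -!map_mxM mul_cyclic_basis.
by split; last exact: GL_conj_same_local_stats.
Qed.
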